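(* Let $(\mathcal{G},\mu\circ\lambda)$ be a measured groupoid and let $\pi$ be a probability measure equivalent to $\mu\circ\lambda$ (with $t_*\pi=s_*\pi=\mu$). Let $(\check{\mathcal{B}},\check\theta_\mu)$ be the Poisson boundary of the Markov operator generated by the reflected measure $\check\pi$ with initial distribution $\mu$. Then $\check\theta_\mu$ is $\pi$-stationary: $\pi*\check\theta_\mu=\check\theta_\mu$, where $\pi*\check\theta_\mu:=\int_X\int_{\mathcal{G}}(g^{-1})_*\check\theta^x\,d\pi^x(g)\,d\mu(x)$.
   Context: $\mathcal{G}$ is a Borel groupoid with standard Borel unit space $X$, source $s$, target $t$, Borel Haar system $\lambda$ and quasi-invariant probability $\mu$ on $X$. $\check\pi$ is the image of $\pi$ under inversion; $\pi^x$ is the disintegration of $\pi$ over $t$ (supported on $t^{-1}(x)$). Disintegrate $\check\pi$ over $t$ as $\check\pi^x$ and set $\check\pi^g=g_*\check\pi^{s(g)}$. On $\Omega_{\mathcal{G}}=\{(g_0,g_1,\dots):t(g_i)=t(g_j)\}$, $\check{\mathbb{P}}_g$ is the Markov measure starting at $\delta_g$ with transitions $\check\pi^{g_{n-1}}$ and $\check{\mathbb{P}}_m=\int\check{\mathbb{P}}_g dm(g)$. The Poisson boundary $\check{\mathcal{B}}$ is the space of ergodic components of stable equivalence of the shift $T(g_0,g_1,\dots)=(g_1,\dots)$, with map $\check{\mathbf{bnd}}$, $\check\theta_\mu=\check{\mathbf{bnd}}_*\check{\mathbb{P}}_\mu$, target induced by $t(g_0)$, $\mathcal{G}$-action induced by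 diagonal left multiplication; $\check\theta^x=\check{\mathbf{bnd}}_*\check{\mathbb{P}}_x$ is the disintegration of $\check\theta_\mu$ over $X$. For $g\in t^{-1}(x)$, $g^{-1}$ maps the fiber $\check{\mathcal{B}}^x$ to $\check{\mathcal{B}}^{s(g)}$. *)

From HB Require Import structures.
From mathcomp Require Import all_boot all_order all_algebra.
From mathcomp Require Import all_classical all_reals all_analysis.
From mathcomp Require Import measurable_realfun.
Set Implicit Arguments. Unset Strict Implicit. Unset Printing Implicit Defensive.
Import Order.TTheory GRing.Theory Num.Theory.
Local Open Scope classical_set_scope.
Local Open Scope ring_scope.

Definition standard_borel (R : realType) (d : measure_display)
    (X : measurableType d) : Prop :=
  exists f : X -> R, [/\ injective f, measurable_fun setT f,
    measurable (range f) & forall A, measurable A -> measurable (f @` A)].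

(* Borel groupoid with unit space X: source s, target t, units u,
   (partial) multiplication mul (g h defined when s g = t h; mul is a total
   function whose values off the composable pairs are irrelevant), inverse. *)
Record is_borel_groupoid (dX dG : measure_display) (X : measurableType dX)
    (G : measurableType dG) (s t : G -> X) (u : X -> G) (mul : G -> G -> G)
    (inv : G -> G) : Prop := {
  gpd_s_unit : forall x, s (u x) = x;
  gpd_t_unit : forall x, t (u x) = x;
  gpd_s_mul : forall g h, s g = t h -> s (mul g h) = s h;
  gpd_t_mul : forall g h, s g = t h -> t (mul g h) = t g;
  gpd_assoc : forall g h k, s g = t h -> s h = t k ->
    mul (mul g h) k = mul g (mul h k);
  gpd_unit_l : forall g, mul (u (t g)) g = g;
  gpd_unit_r : forall g, mul g (u (s g)) = g;
  gpd_s_inv : forall g, s (inv g) = t g;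
  gpd_t_inv : forall g, t (inv g) = s g;
  gpd_inv_r : forall g, mul g (inv g) = u (t g);
  gpd_inv_l : forall g, mul (inv g) g = u (s g);
  gpd_meas_s : measurable_fun setT s;
  gpd_meas_t : measurable_fun setT t;
  gpd_meas_u : measurable_fun setT u;
  gpd_meas_inv : measurable_fun setT inv;
  gpd_meas_comp : measurable [set p : G * G | s p.1 = t p.2];
  gpd_meas_mul : measurable_fun [set p : G * G | s p.1 = t p.2]
                   (fun p => mul p.1 p.2) }.

Record haar_system (R : realType) (dX dG : measure_display)
    (X : measurableType dX) (G : measurableType dG) (s t : G -> X)
    (mul : G -> G -> G) (lambda : X -> {measure set G -> \bar R}) : Prop := {
  haar_support : forall x, lambda x [set g | t g <> x] = 0%E;
  haar_borel : forall A, measurable A -> measurable_fun setT ((fun x => lambda x A) : X -> \bar R);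
  haar_invariant : forall g A, measurable A ->
    lambda (s g) [set k | t k = s g /\ A (mul g k)] = lambda (t g) A;
  haar_sigma_finite : forall x, sigma_finite setT (lambda x) }.

Definition mu_lambda (R : realType) (dX dG : measure_display)
    (X : measurableType dX) (G : measurableType dG)
    (mu : {measure set X -> \bar R}) (lambda : X -> {measure set G -> \bar R})
    : set G -> \bar R :=
  fun A => (\int[mu]_x lambda x A)%E.

Definition equiv_measures (R : realType) (d : measure_display)
    (T : measurableType d) (m1 m2 : set T -> \bar R) : Prop :=
  forall A, measurable A -> (m1 A = 0%E <-> m2 A = 0%E).

Definition disintegration (R : realType) (dX dG : measure_display)
    (X : measurableType dX) (G : measurableType dG)
    (mu : {measure set X -> \bar R}) (nu : set G -> \bar R) (t : G -> X)
    (k : X -> probability G R) : Prop :=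
  [/\ forall A, measurable A -> measurable_fun setT ((fun x => k x A) : X -> \bar R),
      forall A, measurable A -> nu A = (\int[mu]_x k x A)%E
    & forall x, k x [set g | t g <> x] = 0%E].

Definition coord_sets (dG : measure_display) (G : measurableType dG)
    : set (set (nat -> G)) :=
  fun S => exists n (A : set G), measurable A /\ S = [set w | A (w n)].

Definition path_space (dG : measure_display) (G : measurableType dG) :=
  g_sigma_algebraType (@coord_sets _ G).

Definition path_shift (T : Type) (w : nat -> T) : nat -> T := fun n => w n.+1.

(* P g is the Markov measure started at delta_g with transition probabilities
   check_pi^h = h_* check_pi^{s h} (check_pi^x = picx x): Markov property at
   time 0.  This determines P uniquely on cylinders. *)
Definition markov_family (R : realType) (dX dG : measure_display)
    (X : measurableType dX) (G : measurableType dG) (s t : G -> X)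
    (mul : G -> G -> G) (picx : X -> probability G R)
    (P : G -> probability (path_space G) R) : Prop :=
  (forall B : set (path_space G), measurable B ->
     measurable_fun setT ((fun g => P g B) : G -> \bar R)) /\
  (forall g (A0 : set G) (B : set (path_space G)), measurable A0 -> measurable B ->
     P g [set w | A0 (w 0%N) /\ B (path_shift w)] =
     ((\1_A0 g)%:E * \int[picx (s g)]_(h in [set h | t h = s g]) P (mul g h) B)%E).

From HB Require Import structures.
From mathcomp Require Import all_boot all_order all_algebra.
From mathcomp Require Import all_classical all_reals all_analysis.
From mathcomp Require Import measurable_realfun giry.
Set Implicit Arguments.
Unset Strict Implicit.
Unset Printing Implicit Defensive.
Import Order.TTheory GRing.Theory Num.Theory.
Local Open Scope classical_set_scope.
Local Open Scope ring_scope.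

(* Left translation acts equivariantly on the Markov measures: for [s k = t h],
   the law of [k * w], where [w] is the path started at [h], is the law of the
   path started at [k * h].  Both sides are computed on cylinders by the Markov
   property at time 0, and agree on all measurable sets by uniqueness of
   measures.  With [h = u x] and [k = g^-1] this turns the left-hand side into
   [\int_pi P_(g^-1)(A)], which the disintegration of [check_pi] rewrites as
   [\int_mu \int_(check_pi^x) P_h(A)]; since [A] is shift invariant, the Markov
   property gives the same value for [P_(u x)(A)]. *)

Lemma standard_borel_measurable_set1 (R : realType) d (X : measurableType d) :
  standard_borel R X -> forall x : X, measurable [set x].
Proof.
case=> f [f_inj mf _ _] x.
have -> : [set x] = f @^-1` [set f x].
  by apply/seteqP; split => y /=; [move->|move/f_inj].
by rewrite -[_ @^-1` _]setTI; exact: mf.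
Qed.

Section integral_off_null.
Context d (T : measurableType d) (R : realType) (mu : {measure set T -> \bar R}).
Local Open Scope ereal_scope.
Import HBNNSimple.

(* Unlike [ge0_ae_eq_integral], no measurability of [f] or [g] is assumed: the
   translated boundary events integrated in the theorem are not known to be
   measurable in [g]. *)
Lemma ge0_le_integral_off_null (N : set T) (f g : T -> \bar R) :
  measurable N -> mu N = 0 -> (forall x, 0 <= f x) -> (forall x, 0 <= g x) ->
  (forall x, ~ N x -> f x <= g x) -> \int[mu]_x f x <= \int[mu]_x g x.
Proof.
move=> mN muN0 f0 g0 fg; rewrite ge0_integralTE// ge0_integralTE//.
apply: ge_ereal_sup => _ [h /= hf <-].
have mNC : measurable (~` N) by exact: measurableC.
apply: ereal_sup_ubound; exists (proj_nnsfun h mNC).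
  move=> x /=; rewrite mindicE; case: (boolP (x \in ~` N)) => [/set_mem Nx|_].
    by rewrite mulr1 (le_trans _ (fg _ Nx)) //; exact: hf.
  by rewrite mulr0 g0.
rewrite -mrestrict -(integral_nnsfun _ mNC).
have -> : sintegral mu h = \int[mu]_x (h x)%:E by rewrite integral_nnsfun// patch_setT.
rewrite [RHS](ge0_negligible_integral _ _ _ _ muN0)// ?setTD//.
- exact/measurable_EFinP.
- by move=> x _; rewrite lee_fin.
Qed.

Lemma ge0_eq_integral_off_null (N : set T) (f g : T -> \bar R) :
  measurable N -> mu N = 0 -> (forall x, 0 <= f x) -> (forall x, 0 <= g x) ->
  (forall x, ~ N x -> f x = g x) -> \int[mu]_x f x = \int[mu]_x g x.
Proof.
move=> mN muN0 f0 g0 fg; apply/le_anti/andP.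
by split; apply: (ge0_le_integral_off_null mN muN0) => // x /fg ->.
Qed.

End integral_off_null.

Section ge0_integral_disintegration.
Context dX dY dZ (X : measurableType dX) (Y : measurableType dY)
  (Z : measurableType dZ) (R : realType).
Local Open Scope ereal_scope.
Variables (mu : subprobability X R) (l : X -> subprobability Z R).
Variables (m : measure Y R) (phi : Y -> Z).
Hypothesis mphi : measurable_fun setT phi.
Hypothesis ml : forall B, measurable B -> measurable_fun setT (l ^~ B).
Hypothesis m_phi : forall B, measurable B -> m (phi @^-1` B) = \int[mu]_x l x B.

Lemma ge0_integral_disintegration (f : Z -> \bar R) :
  (forall z, 0 <= f z) -> measurable_fun setT f ->
  \int[m]_y f (phi y) = \int[mu]_x \int[l x]_z f z.
Proof.
move=> f0 mf.
have ml_giry : measurable_fun setT (l : X -> giry Z R).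
  exact: measurable_giry_codensity.
have giry_bindE B : measurable B -> giry_bind mu ml_giry B = \int[mu]_x l x B.
  move=> mB; have := @giry_int_bind _ _ _ _ _ mu _ ml_giry (fun z => (\1_B z)%:E).
  rewrite /giry_int integral_indic ?setIT //.
  under eq_integral do rewrite integral_indic ?setIT //.
  by apply => //; exact/measurable_EFinP/measurable_indic.
rewrite -[RHS](giry_int_bind _ _ mf f0).
transitivity (\int[pushforward m phi]_z f z); first by rewrite ge0_integral_pushforward.
apply: eq_measure_integral => B mB _.
exact: etrans (m_phi mB) (esym (giry_bindE B mB)).
Qed.

End ge0_integral_disintegration.

Section pushforward_in.
Context d d' (T : measurableType d) (T' : measurableType d') (R : realType).
Variables (m : {measure set T -> \bar R}) (D : set T) (phi : T -> T').
Local Open Scope ereal_scope.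

Definition pushforward_in (mD : measurable D) (mphi : measurable_fun D phi) :
  set T' -> \bar R := fun B => m (D `&` phi @^-1` B).

Hypotheses (mD : measurable D) (mphi : measurable_fun D phi).

Let pushforward_in0 : pushforward_in mD mphi set0 = 0.
Proof. by rewrite /pushforward_in preimage_set0 setI0 measure0. Qed.

Let pushforward_in_ge0 B : 0 <= pushforward_in mD mphi B.
Proof. exact: measure_ge0. Qed.

Let pushforward_in_sigma_additive : semi_sigma_additive (pushforward_in mD mphi).
Proof.
move=> F mF tF mUF; rewrite /pushforward_in preimage_bigcup setI_bigcupr.
apply: measure_semi_sigma_additive.
- by move=> n; exact: mphi.
- apply/trivIsetP => i j _ _ ij; move/trivIsetP : tF => /(_ i j I I ij) Fij.
  apply/seteqP; split => // w [[_ Fiw] [_ Fjw]].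
  by have : (F i `&` F j) (phi w) by []; rewrite Fij.
- by rewrite -setI_bigcupr -preimage_bigcup; exact: mphi.
Qed.

HB.instance Definition _ := isMeasure.Build _ _ _ (pushforward_in mD mphi)
  pushforward_in0 pushforward_in_ge0 pushforward_in_sigma_additive.

End pushforward_in.

Section path_space_cylinders.
Context (dG : measure_display) (G : measurableType dG).

Definition cylinder (A : nat -> set G) : set (path_space G) :=
  [set w | forall n, A n (w n)].

Definition finite_cylinders : set (set (path_space G)) :=
  [set C | exists N (A : nat -> set G), [/\ forall n, measurable (A n),
     forall n, (N <= n)%N -> A n = setT & C = cylinder A]].

Lemma measurable_coord n (A : set G) : measurable A ->
  measurable [set w : path_space G | A (w n)].
Proof. by move=> mA; apply: sub_sigma_algebra; exists n, A. Qed.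

Lemma measurable_cylinder A : (forall n, measurable (A n)) ->
  measurable (cylinder A).
Proof.
move=> mA; have -> : cylinder A = \bigcap_n [set w : path_space G | A n (w n)].
  by apply/seteqP; split => w /= Aw n; [move=> _|]; exact: Aw.
by apply: bigcapT_measurable => n; exact: measurable_coord.
Qed.

Lemma cylinder_shift A :
  cylinder A = [set w | A 0%N (w 0%N) /\ cylinder (fun n => A n.+1) (path_shift w)].
Proof.
by apply/seteqP; split => [w Aw|w [Aw0 Aw] [|n] //]; first by split => [|n]; exact: Aw.
Qed.

Lemma setI_closed_finite_cylinders : setI_closed finite_cylinders.
Proof.
move=> _ _ [N1 [A1 [mA1 A1T ->]]] [N2 [A2 [mA2 A2T ->]]].
exists (maxn N1 N2), (fun n => A1 n `&` A2 n); split.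
- by move=> n; exact: measurableI.
- by move=> n; rewrite geq_max => /andP[n1 n2]; rewrite A1T // A2T // setIT.
- apply/seteqP; split => [w [A1w A2w] n|w Aw]; first by split.
  by split => n; have [] := Aw n.
Qed.

Lemma path_space_measurableE :
  @measurable _ (path_space G) = <<s finite_cylinders >>.
Proof.
apply/seteqP; split; last first.
  apply: smallest_sub; first exact: sigma_algebra_measurable.
  by move=> _ [N [A [mA _ ->]]]; exact: measurable_cylinder.
apply: smallest_sub; first exact: smallest_sigma_algebra.
move=> _ [n [A [mA ->]]]; apply: sub_sigma_algebra.
exists n.+1, (fun i => if i == n then A else setT); split.
- by move=> i; case: ifP.
- by move=> i ni; case: ifP => // /eqP ein; move: ni; rewrite ein ltnn.
- apply/seteqP; split => [w Aw i|w Aw]; first by case: ifP => // /eqP ->.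
  by have := Aw n; rewrite eqxx.
Qed.

End path_space_cylinders.

Section markov_equivariance.
Context (R : realType) (dX dG : measure_display).
Context (X : measurableType dX) (G : measurableType dG).
Variables (s t : G -> X) (u : X -> G) (mul : G -> G -> G) (inv : G -> G).
Variables (picx : X -> probability G R) (P : G -> probability (path_space G) R).
Local Open Scope ereal_scope.
Hypothesis gpd : is_borel_groupoid s t u mul inv.
Hypothesis measurable_point : forall x : X, measurable [set x].
Hypothesis picx_fibre : forall x, picx x [set g | t g <> x] = 0.
Hypothesis P_markov : markov_family s t mul picx P.

Definition fibre_paths (x : X) : set (path_space G) := [set w | forall n, t (w n) = x].

Definition lmul_path (k : G) (w : path_space G) : path_space G := fun n => mul k (w n).

Lemma measurable_fibre x : measurable [set g : G | t g = x].
Proof.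
by have := gpd_meas_t gpd measurableT (measurable_point x); rewrite setTI.
Qed.

Lemma measurable_lmul_fibre k (B : set G) : measurable B ->
  measurable [set g | t g = s k /\ B (mul k g)].
Proof.
move=> mB; have mk : measurable_fun [set g | t g = s k] (fun g => (k, g)).
  exact/measurable_funTS/measurable_fun_pair.
have k_comp : (fun g => (k, g)) @` [set g | t g = s k] `<=`
    [set p : G * G | s p.1 = t p.2] by move=> _ [g /= tg <-]; rewrite /= tg.
exact: (measurable_comp (gpd_meas_comp gpd) k_comp (gpd_meas_mul gpd) mk)
  (measurable_fibre (s k)) B mB.
Qed.

Lemma measurable_fibre_paths x : measurable (fibre_paths x).
Proof.
exact: (@measurable_cylinder _ _ (fun=> [set g | t g = x]) (fun=> measurable_fibre x)).
Qed.

Lemma fibre_lmul_cylinder k A :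
  fibre_paths (s k) `&` lmul_path k @^-1` cylinder A =
  cylinder (fun n => [set g | t g = s k /\ A n (mul k g)]).
Proof.
apply/seteqP; split => [w [tw Aw] n|w Aw]; first by split.
by split => n; have [] := Aw n.
Qed.

Lemma measurable_lmul_path k : measurable_fun (fibre_paths (s k)) (lmul_path k).
Proof.
apply: (@measurability _ _ _ _ (fibre_paths (s k)) (lmul_path k) (@coord_sets _ G)) => //.
move=> _ [_ [n [A [mA ->]]] <-].
rewrite (_ : [set w | A (w n)] = cylinder (fun i => if i == n then A else setT)).
  rewrite fibre_lmul_cylinder; apply: measurable_cylinder => i.
  by apply: measurable_lmul_fibre; case: ifP.
apply/seteqP; split => [w Aw i|w Aw]; first by case: ifP => // /eqP ->.
by have := Aw n; rewrite eqxx.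
Qed.

Lemma markov_coord_off_fibre n h : P h [set w | t (w n) <> t h] = 0.
Proof.
elim: n h => [|n IH] h.
  have := P_markov.2 h _ setT (measurableC (measurable_fibre (t h))) measurableT.
  rewrite (_ : [set w | _ /\ _] = [set w | t (w 0%N) <> t h]); last first.
    by apply/seteqP; split => w /=; [case|move=> ?; split].
  by move=> ->; rewrite indicE memNset ?mul0e//= => /(_ erefl).
have mC := measurable_coord n (measurableC (measurable_fibre (t h))).
have := P_markov.2 h setT _ measurableT mC.
rewrite (_ : [set w | _ /\ _] = [set w | t (w n.+1) <> t h]); last first.
  by apply/seteqP; split => w /=; [case|move=> ?; split].
move=> ->; rewrite integral0_eq ?mule0// => h' /= th'.
by rewrite -(gpd_t_mul gpd (esym th')); exact: IH.
Qed.

Lemma markov_fibre_paths h : P h (fibre_paths (t h)) = 1.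
Proof.
have mC := measurableC (measurable_fibre_paths (t h)).
suff null : P h (~` fibre_paths (t h)) = 0.
  by have := probability_setC (P h) mC; rewrite setCK null sube0.
apply/eqP; rewrite eq_le measure_ge0 andbT.
apply: (le_trans (measure_sigma_subadditive _ _ mC _)).
- by move=> n; exact: measurable_coord (measurableC (measurable_fibre (t h))).
- by move=> w /existsNP[n tw]; exists n.
by rewrite eseries0// => n _ _; exact: markov_coord_off_fibre.
Qed.

Lemma markov_lmul_cylinder N A h k :
  (forall n, measurable (A n)) -> (forall n, (N <= n)%N -> A n = setT) ->
  s k = t h ->
  P h (cylinder (fun n => [set g | t g = s k /\ A n (mul k g)])) =
  P (mul k h) (cylinder A).
Proof.
elim: N A h => [|N IH] A h mA AT skh.
  have -> : cylinder A = setT by apply/seteqP; split => // w _ n; rewrite AT.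
  have -> : cylinder (fun n => [set g | t g = s k /\ A n (mul k g)]) =
      fibre_paths (t h).
    by apply/seteqP; split => w tw n; [case: (tw n) => ->|split; rewrite ?AT // skh].
  by rewrite markov_fibre_paths probability_setT.
have mAk n : measurable [set g | t g = s k /\ A n (mul k g)].
  exact: measurable_lmul_fibre.
rewrite cylinder_shift [in RHS]cylinder_shift.
rewrite (P_markov.2 _ _ _ (mAk 0%N) (measurable_cylinder (fun n => mAk n.+1))).
rewrite (P_markov.2 _ _ _ (mA 0%N) (measurable_cylinder (fun n => mA n.+1))).
rewrite (gpd_s_mul gpd skh); congr (_ * _).
  rewrite !indicE; congr (_%:R%:E).
  have [Akh|nAkh] := pselect (A 0%N (mul k h)).
    by rewrite (mem_set Akh) (@mem_set _ [set g | _] h (conj (esym skh) Akh)).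
  by rewrite !memNset // => -[].
apply: eq_integral => h' /set_mem /= th'.
have thh' : t (mul h h') = t h := gpd_t_mul gpd (esym th').
rewrite (gpd_assoc gpd skh (esym th')); apply: IH => //.
  by move=> n Nn; exact: AT.
by rewrite thh'.
Qed.

Lemma markov_lmul h k B : s k = t h -> measurable B ->
  P h (fibre_paths (t h) `&` lmul_path k @^-1` B) = P (mul k h) B.
Proof.
move=> skh mB; rewrite -skh.
pose Q := pushforward_in (P h) (measurable_fibre_paths (s k)) (@measurable_lmul_path k).
have finite_Q : Q setT < +oo.
  apply: (le_lt_trans (probability_le1 (P h) _)); last exact: ltey.
  exact: (@measurable_lmul_path k) (measurable_fibre_paths (s k)) setT measurableT.
apply: (measure_unique _ (fun=> setT) (path_space_measurableE G)
  (@setI_closed_finite_cylinders _ G) _ _ Q (P (mul k h)) _ (fun=> finite_Q)).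
- by move=> _; exists 0%N, (fun=> setT); split => //; apply/seteqP; split.
- by rewrite bigcup_const.
- move=> _ [N [A [mA AT ->]]].
  change (P h (fibre_paths (s k) `&` lmul_path k @^-1` cylinder A) =
    P (mul k h) (cylinder A)).
  by rewrite fibre_lmul_cylinder (markov_lmul_cylinder mA AT skh).
- exact: mB.
Qed.

Lemma markov_unit_lmul_inv g A : measurable A ->
  P (u (t g)) (fibre_paths (t g) `&` lmul_path (inv g) @^-1` A) = P (inv g) A.
Proof.
move=> mA; have sgu : s (inv g) = t (u (t g)) by rewrite (gpd_s_inv gpd) (gpd_t_unit gpd).
transitivity (P (mul (inv g) (u (t g))) A).
  by rewrite -(markov_lmul sgu mA) (gpd_t_unit gpd).
by rewrite -(gpd_s_inv gpd) (gpd_unit_r gpd).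
Qed.

Lemma markov_shift_invariant x (A : set (path_space G)) : measurable A ->
  (@path_shift G : path_space G -> path_space G) @^-1` A = A ->
  P (u x) A = \int[picx x]_h P h A.
Proof.
move=> mA shiftA; have := P_markov.2 (u x) setT A measurableT mA.
rewrite (_ : [set w | setT (w 0%N) /\ A (path_shift w)] = A); last first.
  by rewrite -[RHS]shiftA; apply/seteqP; split => w /=; [case|split].
move=> ->; rewrite indicE mem_set // mul1e (gpd_s_unit gpd).
rewrite (eq_integral (fun h => P h A)); last first.
  by move=> h /set_mem /= <-; rewrite (gpd_unit_l gpd).
rewrite [RHS](ge0_negligible_integral _ _ _ _ (picx_fibre x)) //.
- by rewrite setTD; congr (integral _ _ _); apply/seteqP; split => h /= => [->|/contrapT].
- exact: measurableC (measurable_fibre x).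
- exact: P_markov.1.
Qed.

End markov_equivariance.

Theorem proposition4p4 (R : realType) (dX dG : measure_display)
    (X : measurableType dX) (G : measurableType dG)
    (s t : G -> X) (u : X -> G) (mul : G -> G -> G) (inv : G -> G)
    (lambda : X -> {measure set G -> \bar R}) (mu : probability X R)
    (pi : probability G R) (pix picx : X -> probability G R)
    (P : G -> probability (path_space G) R) :
  standard_borel R X ->
  is_borel_groupoid s t u mul inv ->
  haar_system s t mul lambda ->
  (* mu is quasi-invariant *)
  equiv_measures (mu_lambda mu lambda)
    (fun A => mu_lambda mu lambda (inv @^-1` A)) ->
  (* pi is equivalent to mu o lambda, with t_* pi = s_* pi = mu *)
  equiv_measures pi (mu_lambda mu lambda) ->
  (forall B, measurable B -> pi (t @^-1` B) = mu B) ->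
  (forall B, measurable B -> pi (s @^-1` B) = mu B) ->
  (* pi^x : disintegration of pi over t;  check_pi^x : of check_pi over t *)
  disintegration mu pi t pix ->
  disintegration mu (fun A => pi (inv @^-1` A)) t picx ->
  (* P g = check_P_g : Markov measures with transitions check_pi^g *)
  markov_family s t mul picx P ->
  (* pi * check_theta_mu = check_theta_mu, tested on the boundary sigma-algebra
     (measurable path_shift-invariant sets of paths) *)
  forall A : set (path_space G), measurable A -> (@path_shift G : path_space G -> path_space G) @^-1` A = A ->
  (\int[mu]_x \int[pix x]_g
      P (u x) [set w | (forall n, t (w n) = x) /\
                       A (fun n => mul (inv g) (w n))])%E
  = (\int[mu]_x P (u x) A)%E.
Proof.
move=> hX gpd _ _ _ _ _ [pix_m pix_pi pix_fibre] [picx_m picx_pi picx_fibre] markov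
  A mA shiftA.
have mX1 := standard_borel_measurable_set1 hX.
have mPA : measurable_fun setT (fun h => P h A) := markov.1 A mA.
transitivity (\int[mu]_x \int[pix x]_g P (inv g) A)%E.
  apply: eq_integral => x _.
  have mC := measurableC (measurable_fibre gpd mX1 x).
  apply: (ge0_eq_integral_off_null mC (pix_fibre x)) => // g /contrapT <-.
  by rewrite (markov_unit_lmul_inv gpd mX1 markov _ mA).
have mPinvA : measurable_fun setT (fun g => P (inv g) A).
  exact: measurableT_comp mPA (gpd_meas_inv gpd).
transitivity (\int[pi]_g P (inv g) A)%E.
  by rewrite -(ge0_integral_disintegration (@measurable_id _ _ setT) pix_m pix_pi).
rewrite (ge0_integral_disintegration (gpd_meas_inv gpd) picx_m picx_pi
  (f := fun h => P h A)) //.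
apply: eq_integral => x _.
by rewrite (markov_shift_invariant gpd mX1 picx_fibre markov x mA shiftA).
Qed.
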